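(* Let $\mathcal{H}$ be a real Hilbert space, $f:\mathcal{H}\to\mathbb{R}$ $\mu$-strongly convex and $L$-smooth with $0<\mu<L<\infty$, $g:\mathcal{H}\to\mathbb{R}\cup\{+\infty\}$ convex, proper and lower semicontinuous, $q=\mu/L$, and $x^\star$ the unique minimizer of $f+g$. Let the Prox-ITEM iterates $z^k$, scalars $A_k$ and the quantities $\mathcal{V}_k$ be as defined in the context. Then for every $k\in\mathbb{N}_0$, $$(L+\mu A_{k+1})\|z^{k+1}-x^\star\|^2\le\mathcal{V}_k.$$
   Context: $\operatorname{Prox}^{\gamma}_g(x)=\operatorname{argmin}_z\big(g(z)+\frac{1}{2\gamma}\|x-z\|^2\big)$. Prox-ITEM from $x^0\in\mathcal{H}$: $A_0=0$, $z^0=x^0$, and for $k\ge0$: $A_{k+1}=\frac{(1+q)A_k+2(1+\sqrt{(1+A_k)(1+qA_k)})}{(1-q)^2}$, $\beta_k=\frac{A_k}{(1-q)A_{k+1}}$, $\delta_k=\sqrt{\frac{A_{k+1}}{1+qA_{k+1}}}$, $y^k=(1-\beta_k)z^k+\beta_kx^k$, $\bar z^{k+1}=(1-q\delta_k)z^k+q\delta_ky^k-\frac{\delta_k}{L}\nabla f(y^k)$, $z^{k+1}=\operatorname{Prox}^{\delta_k/L}_g(\bar z^{k+1})$, $x^{k+1}=y^k-\frac1L\nabla f(y^k)-\frac1{\delta_k}(\bar z^{k+1}-z^{k+1})$. Define $\mathcal{I}_f(x,y)=f(x)-f(y)-\langle\nabla f(y),x-y\rangle-\frac{\mu}{2}\|x-y\|^2-\frac{1}{2(L-\mu)}\|\nabla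 f(x)-\nabla f(y)-\mu(x-y)\|^2$ and $\mathcal{I}_g(x,y,s)=g(x)-g(y)-\langle s,x-y\rangle$. Let $s_g^k=L\delta_{k-1}^{-1}(\bar z^k-z^k)$ for $k\ge1$, $s_g^\star=-\nabla f(x^\star)$, and $\sigma_k=\sqrt{(1+A_k)(1+qA_k)}$. For $k\in\mathbb{N}_0$, $$\mathcal{V}_k=(1-q)A_k\mathcal{I}_f(y^{k-1},x^\star)+qA_k\mathcal{I}_g(x^\star,z^k,s_g^k)+(qA_k+1-\sigma_k)\mathcal{I}_g(z^k,x^\star,s_g^\star)+\frac{A_k}{2L}\|s_g^k-s_g^\star\|^2+(L+\mu A_k)\|z^k-x^\star\|^2,$$ with the conventions $y^{-1}=y^0$, $s_g^0=s_g^1$, $0\cdot(\pm\infty)=0$. *)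

From HB Require Import structures.
From mathcomp Require Import all_boot all_order all_algebra.
From mathcomp Require Import all_classical all_reals.
Import constructive_ereal.
Set Implicit Arguments. Unset Strict Implicit. Unset Printing Implicit Defensive.
Import Order.TTheory GRing.Theory Num.Theory.
Local Open Scope ring_scope.

Section Defs.
Variables (R : realType) (H : lmodType R) (ip : H -> H -> R).

Definition nrm (x : H) : R := Num.sqrt (ip x x).

Definition is_inner_product : Prop :=
  [/\ (forall x y, ip x y = ip y x),
      (forall a x y z, ip (a *: x + y) z = a * ip x z + ip y z),
      (forall x, 0 <= ip x x) &
      (forall x, ip x x = 0 -> x = 0)].

Definition is_complete : Prop :=
  forall u : nat -> H,
    (forall eps : R, 0 < eps -> exists N, forall m n, (N <= m)%N -> (N <= n)%N ->
        nrm (u m - u n) < eps) ->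
    exists l : H, forall eps : R, 0 < eps -> exists N, forall n, (N <= n)%N ->
        nrm (u n - l) < eps.

Definition is_hilbert : Prop := is_inner_product /\ is_complete.

Definition is_gradient (f : H -> R) (gf : H -> H) : Prop :=
  forall x (eps : R), 0 < eps -> exists2 d : R, 0 < d &
    forall h, nrm h < d -> `|f (x + h) - f x - ip (gf x) h| <= eps * nrm h.

Definition strongly_convex (mu : R) (f : H -> R) : Prop :=
  forall x y (t : R), 0 <= t <= 1 ->
    f (t *: x + (1 - t) *: y) <=
      t * f x + (1 - t) * f y - mu / 2 * t * (1 - t) * nrm (x - y) ^+ 2.

Definition L_smooth (L : R) (f : H -> R) (gf : H -> H) : Prop :=
  is_gradient f gf /\ forall x y, nrm (gf x - gf y) <= L * nrm (x - y).

Definition no_minus_infty (g : H -> \bar R) : Prop := forall x, g x != -oo%E.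
Definition proper_fun (g : H -> \bar R) : Prop := exists x, (g x < +oo)%E.
Definition convex_efun (g : H -> \bar R) : Prop :=
  forall x y (t : R), 0 <= t <= 1 ->
    (g (t *: x + (1 - t) *: y)%R <= t%:E * g x + (1 - t)%R%:E * g y)%E.
Definition lsc_efun (g : H -> \bar R) : Prop :=
  forall x (t : R), (t%:E < g x)%E -> exists2 d : R, 0 < d &
    forall y, nrm (y - x) < d -> (t%:E < g y)%E.

Definition is_prox (g : H -> \bar R) (gamma : R) (v p : H) : Prop :=
  forall u, (g p + ((2 * gamma)^-1 * nrm (v - p) ^+ 2)%:E <=
             g u + ((2 * gamma)^-1 * nrm (v - u) ^+ 2)%:E)%E.

Definition is_minimizer (F : H -> \bar R) (xs : H) : Prop :=
  forall x, (F xs <= F x)%E.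

Fixpoint Aseq (q : R) (k : nat) : R :=
  match k with
  | 0 => 0
  | k'.+1 => let a := Aseq q k' in
      ((1 + q) * a + 2 * (1 + Num.sqrt ((1 + a) * (1 + q * a)))) / (1 - q) ^+ 2
  end.
Definition beta (q : R) (k : nat) : R := Aseq q k / ((1 - q) * Aseq q k.+1).
Definition delta (q : R) (k : nat) : R :=
  Num.sqrt (Aseq q k.+1 / (1 + q * Aseq q k.+1)).
Definition sigma (q : R) (k : nat) : R :=
  Num.sqrt ((1 + Aseq q k) * (1 + q * Aseq q k)).

Variables (L mu : R) (gf : H -> H) (x z : nat -> H).
Let q := mu / L.

Definition yit (k : nat) : H := (1 - beta q k) *: z k + beta q k *: x k.
Definition zbar_next (k : nat) : H :=
  (1 - q * delta q k) *: z k + (q * delta q k) *: yit k - (delta q k / L) *: gf (yit k).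

Definition prox_item (g : H -> \bar R) : Prop :=
  [/\ z 0 = x 0,
      (forall k, is_prox g (delta q k / L) (zbar_next k) (z k.+1)) &
      (forall k, x k.+1 = yit k - L^-1 *: gf (yit k)
                          - (delta q k)^-1 *: (zbar_next k - z k.+1))].

(* s_g^k for k >= 1, with the convention s_g^0 = s_g^1 *)
Definition sg (k : nat) : H :=
  let k' := (k.-1)%N in L * (delta q k')^-1 *: (zbar_next k' - z k'.+1).
(* y^{k-1}, with the convention y^{-1} = y^0 *)
Definition yprev (k : nat) : H := yit (k.-1)%N.

Definition If (f : H -> R) (u v : H) : R :=
  f u - f v - ip (gf v) (u - v) - mu / 2 * nrm (u - v) ^+ 2
  - (2 * (L - mu))^-1 * nrm (gf u - gf v - mu *: (u - v)) ^+ 2.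
Definition Ig (g : H -> \bar R) (u v s : H) : \bar R :=
  (g u - g v - (ip s (u - v))%:E)%E.

(* Lyapunov quantity V_k (extended-real valued; 0 * (+-oo) = 0 in \bar R) *)
Definition Vk (f : H -> R) (g : H -> \bar R) (xs : H) (k : nat) : \bar R :=
  let A := Aseq q k in
  let sstar := - gf xs in
  (((1 - q) * A * If f (yprev k) xs)%:E
   + (q * A)%:E * Ig g xs (z k) (sg k)
   + (q * A + 1 - sigma q k)%:E * Ig g (z k) xs sstar
   + (A / (2 * L) * nrm (sg k - sstar) ^+ 2)%:E
   + ((L + mu * A) * nrm (z k - xs) ^+ 2)%:E)%E.

End Defs.

From mathcomp Require Import all_boot all_order all_algebra.
From mathcomp Require Import all_classical all_reals.
From mathcomp Require Import ring lra.
Import Order.TTheory GRing.Theory Num.Theory.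
Import constructive_ereal.
Local Open Scope ring_scope.

(* The gap V_k - (L + mu A_{k+1}) ||z^{k+1} - x⋆||^2 is an explicit combination with
   nonnegative weights of three interpolation inequalities I_f >= 0 (between y^{k-1},
   y^k and x⋆), of the subgradient inequalities s_g^k in dg(z^k), s_g^{k+1} in dg(z^{k+1})
   (optimality of the prox step) and -grad f(x⋆) in dg(x⋆) (optimality of x⋆), and of two
   squared norms.  The identity holds once A_k, A_{k+1}, sigma_k and beta_k are expressed
   through delta_k, the key relation being delta_k (sigma_k - 1) = A_k.  The interpolation
   inequality rests on the descent lemma, obtained here from the gradient inequality of
   the convex f summed along a uniform subdivision of a segment. *)

Lemma le0_of_le_linear (R : realFieldType) (X c t0 : R) : 0 < t0 ->
  (forall t, 0 < t -> t <= t0 -> X <= c * t) -> X <= 0.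
Proof.
move=> ht0 hX; rewrite leNgt; apply/negP => X_gt0.
have c1_gt0 : 0 < `|c| + 1 by rewrite ltr_pwDr.
pose t := Num.min t0 (X / (`|c| + 1)).
have t_gt0 : 0 < t by rewrite lt_min ht0 divr_gt0.
have := hX t t_gt0 ltac:(by rewrite ge_min lexx).
have : c * t <= `|c| * t by rewrite ler_pM2r // ler_norm.
have : `|c| * t <= `|c| * (X / (`|c| + 1)) by rewrite ler_wpM2l // ge_min lexx orbT.
have : `|c| * (X / (`|c| + 1)) < X by rewrite mulrA ltr_pdivrMr // mulrC ltr_pM2l //; lra.
lra.
Qed.

Lemma le0_of_le_div_nat (R : archiFieldType) (X K : R) : 0 <= K ->
  (forall n : nat, (0 < n)%N -> X <= K / n%:R) -> X <= 0.
Proof.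
move=> K_ge0 hX; rewrite leNgt; apply/negP => X_gt0.
have KX_ge0 : 0 <= K / X by rewrite divr_ge0 // ltW.
pose n := (Num.bound (K / X)).+1.
have n_gt0 : 0 < n%:R :> R by rewrite ltr0n.
have := hX n isT; rewrite ler_pdivlMr // => Xn_le.
have : K / X < n%:R by apply: lt_le_trans (archi_boundP KX_ge0) _; rewrite ler_nat.
rewrite ltr_pdivrMr //; lra.
Qed.

Section ProxItemParameters.
Variables (R : realType) (q : R).
Hypotheses (q_gt0 : 0 < q) (q_lt1 : q < 1).

Lemma Aseq_ge0 k : 0 <= Aseq q k.
Proof.
elim: k => [|k IH] //=; rewrite divr_ge0 ?sqr_ge0 // addr_ge0 ?mulr_ge0 //.
  by rewrite addr_ge0 // ltW.
by rewrite addr_ge0 ?sqrtr_ge0.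
Qed.

Let qAseq_ge0 k : 0 <= q * Aseq q k := mulr_ge0 (ltW q_gt0) (Aseq_ge0 k).

Lemma sigma0 : sigma q 0 = 1.
Proof. by rewrite /sigma /= mulr0 !addr0 mulr1 sqrtr1. Qed.

Lemma sigma_ge1 k : 1 <= sigma q k.
Proof.
have A_ge0 := Aseq_ge0 k; have qA_ge0 := qAseq_ge0 k.
rewrite /sigma -{1}(sqrtr1 R) ler_wsqrtr //; nra.
Qed.

Lemma sigma_sqr k : sigma q k ^+ 2 = (1 + Aseq q k) * (1 + q * Aseq q k).
Proof.
have A_ge0 := Aseq_ge0 k; have qA_ge0 := qAseq_ge0 k.
by rewrite /sigma sqr_sqrtr //; nra.
Qed.

Lemma Aseq_succE k :
  (1 - q) ^+ 2 * Aseq q k.+1 = (1 + q) * Aseq q k + 2 * (1 + sigma q k).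
Proof. by rewrite /= -/(sigma q k); field; rewrite subr_eq0 gt_eqF. Qed.

Lemma Aseq_le_succ k : Aseq q k <= Aseq q k.+1.
Proof.
have q1_gt0 : 0 < (1 - q) ^+ 2 by rewrite exprn_gt0 // subr_gt0.
have A_ge0 := Aseq_ge0 k; have qA_ge0 := qAseq_ge0 k.
have qqA_le : q * (q * Aseq q k) <= q * Aseq q k by rewrite ler_piMl // ltW.
rewrite -(ler_pM2l q1_gt0) Aseq_succE.
by have := sigma_ge1 k; lra.
Qed.

Lemma Aseq_succ_gt0 k : 0 < Aseq q k.+1.
Proof.
have q1_gt0 : 0 < (1 - q) ^+ 2 by rewrite exprn_gt0 // subr_gt0.
have A_ge0 := Aseq_ge0 k; have qA_ge0 := qAseq_ge0 k.
rewrite -(pmulr_rgt0 _ q1_gt0) Aseq_succE.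
by have := sigma_ge1 k; lra.
Qed.

Lemma delta_gt0 k : 0 < delta q k.
Proof.
have P_gt0 := Aseq_succ_gt0 k.
by rewrite /delta sqrtr_gt0 divr_gt0 // ltr_pwDr // mulr_gt0.
Qed.

Lemma delta_sqr k : delta q k ^+ 2 = Aseq q k.+1 / (1 + q * Aseq q k.+1).
Proof.
have P_gt0 := Aseq_succ_gt0 k.
have qP_gt0 : 0 < 1 + q * Aseq q k.+1 by rewrite ltr_pwDr // mulr_gt0.
by rewrite /delta sqr_sqrtr // divr_ge0 // ltW.
Qed.

Lemma q_delta_lt1 k : 0 < 1 - q * delta q k ^+ 2.
Proof.
have P_gt0 := Aseq_succ_gt0 k; have qP_gt0 : 0 < 1 + q * Aseq q k.+1.
  by rewrite ltr_pwDr // mulr_gt0.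
suff -> : 1 - q * delta q k ^+ 2 = (1 + q * Aseq q k.+1)^-1 by rewrite invr_gt0.
by rewrite delta_sqr; field; rewrite gt_eqF.
Qed.

Lemma Aseq_succ_delta k : Aseq q k.+1 = delta q k ^+ 2 / (1 - q * delta q k ^+ 2).
Proof.
have P_gt0 := Aseq_succ_gt0 k.
have qP_gt0 : 0 < 1 + q * Aseq q k.+1 by rewrite ltr_pwDr // mulr_gt0.
by rewrite delta_sqr; field; rewrite gt_eqF //= addrK oner_neq0.
Qed.

(* Squared, this reads A_{k+1} ((sigma_k - 1)^2 - q A_k^2) = A_k^2, which is the
   recursion defining A_{k+1} once sigma_k^2 = (1 + A_k) (1 + q A_k) is used. *)
Lemma sigma_delta k : sigma q k = 1 + Aseq q k / delta q k.
Proof.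
have d_gt0 := delta_gt0 k; have d2 := delta_sqr k.
have rec := Aseq_succE k; have s2 := sigma_sqr k; have s_ge1 := sigma_ge1 k.
have A_ge0 := Aseq_ge0 k; have P_gt0 := Aseq_succ_gt0 k.
move: (delta q k) (sigma q k) (Aseq q k) (Aseq q k.+1) d_gt0 d2 rec s2 s_ge1 A_ge0 P_gt0.
move=> d s A P d_gt0 d2 rec s2 s_ge1 A_ge0 P_gt0.
have q1_neq0 : (1 - q) ^+ 2 != 0 by rewrite expf_neq0 // subr_eq0 gt_eqF.
have qP_gt0 : 0 < 1 + q * P by rewrite ltr_pwDr // mulr_gt0.
have E : (s - 1) ^+ 2 - q * A ^+ 2 = 2 + (1 + q) * A - 2 * s by lra.
have key : P * ((s - 1) ^+ 2 - q * A ^+ 2) = A ^+ 2.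
  by apply: (mulfI q1_neq0); rewrite mulrA rec E; lra.
have ds_eq : d * (s - 1) = A.
  apply/eqP; rewrite -(@eqrXn2 _ 2) ?mulr_ge0 ?subr_ge0 ?(ltW d_gt0) //.
  rewrite exprMn d2 mulrAC (_ : P * _ = A ^+ 2 * (1 + q * P)) ?mulfK ?lt0r_neq0 //.
  lra.
by rewrite -ds_eq; field; rewrite gt_eqF.
Qed.

End ProxItemParameters.

Section Hilbert.
Set Implicit Arguments. Unset Strict Implicit.
Variables (R : realType) (H : lmodType R) (ip : H -> H -> R).
Hypothesis ipC : forall u v, ip u v = ip v u.
Hypothesis ipL : forall a u v w, ip (a *: u + v) w = a * ip u w + ip v w.
Hypothesis ip_ge0 : forall u, 0 <= ip u u.
Hypothesis ip_eq0 : forall u, ip u u = 0 -> u = 0.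

Local Notation nrm := (nrm ip).

Lemma ip0l v : ip 0 v = 0.
Proof. by have := ipL 1 0 0 v; rewrite scale1r addr0 mul1r; lra. Qed.

Lemma ip0r v : ip v 0 = 0.
Proof. by rewrite ipC ip0l. Qed.

Lemma ipDl u w v : ip (u + w) v = ip u v + ip w v.
Proof. by rewrite -{1}[u]scale1r ipL mul1r. Qed.

Lemma ipZl a u v : ip (a *: u) v = a * ip u v.
Proof. by rewrite -[a *: u]addr0 ipL ip0l addr0. Qed.

Lemma ipNl u v : ip (- u) v = - ip u v.
Proof. by rewrite -scaleN1r ipZl mulN1r. Qed.

Lemma ipDr u w v : ip v (u + w) = ip v u + ip v w.
Proof. by rewrite ipC ipDl !(ipC v). Qed.

Lemma ipZr a u v : ip v (a *: u) = a * ip v u.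
Proof. by rewrite ipC ipZl ipC. Qed.

Lemma ipNr u v : ip v (- u) = - ip v u.
Proof. by rewrite ipC ipNl ipC. Qed.

Let ipE := (ipDl, ipDr, ipZl, ipZr, ipNl, ipNr).

Ltac ip_sym :=
  repeat match goal with
  | |- context [ip ?u ?v] => match goal with
    | |- context [ip v u] =>
      tryif constr_eq u v then fail else rewrite [ip v u]ipC
    end
  end.

Lemma nrm_sqrE u : nrm u ^+ 2 = ip u u.
Proof. by rewrite /nrm sqr_sqrtr. Qed.

Lemma nrm_ge0 u : 0 <= nrm u.
Proof. exact: sqrtr_ge0. Qed.

Lemma nrmZ t u : nrm (t *: u) = `|t| * nrm u.
Proof. by rewrite /nrm ipZl ipZr mulrA -expr2 sqrtrM ?sqrtr_sqr // sqr_ge0. Qed.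

Lemma cauchy_schwarz u v : ip u v <= nrm u * nrm v.
Proof.
have ip_sqr_le : ip u v ^+ 2 <= ip u u * ip v v.
  have [/ip_eq0 ->|vv_neq0] := eqVneq (ip v v) 0; first by rewrite ip0r ip0l expr0n mulr0.
  have vv_gt0 : 0 < ip v v by rewrite lt_def vv_neq0 ip_ge0.
  have := ip_ge0 (ip v v *: u - ip u v *: v).
  have -> : ip (ip v v *: u - ip u v *: v) (ip v v *: u - ip u v *: v)
         = ip v v * (ip v v * ip u u - ip u v ^+ 2).
    by rewrite !ipE (ipC v u); ring.
  by rewrite pmulr_rge0 // subr_ge0 mulrC.
apply: le_trans (ler_norm _) _; rewrite -sqrtr_sqr /nrm -sqrtrM //.
exact: ler_wsqrtr.
Qed.

Section Smooth.
Variables (f : H -> R) (gf : H -> H).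

Lemma strongly_convex_grad_le mu : 0 <= mu ->
  strongly_convex ip mu f -> is_gradient ip f gf ->
  forall u v, f v + ip (gf v) (u - v) + mu / 2 * nrm (u - v) ^+ 2 <= f u.
Proof.
move=> mu_ge0 hsc hgrad u v.
set D := nrm (u - v); set X := f v + ip (gf v) (u - v) + mu / 2 * D ^+ 2 - f u.
suff : X <= 0 by rewrite subr_le0.
have D_ge0 : 0 <= D := nrm_ge0 _.
have X_le_eps eps : 0 < eps -> X - eps * D <= 0.
  move=> eps_gt0; have [r r_gt0 hr] := hgrad v eps eps_gt0.
  have D1_gt0 : 0 < D + 1 by lra.
  apply: (@le0_of_le_linear _ _ (mu / 2 * D ^+ 2) (Num.min 1 (r / (D + 1)))).
    by rewrite lt_min ltr01 divr_gt0.
  move=> t t_gt0; rewrite le_min ler_pdivlMr // => /andP[t_le1 tD_le].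
  have tD_lt : nrm (t *: (u - v)) < r.
    by rewrite nrmZ (gtr0_norm t_gt0) -/D; apply: lt_le_trans tD_le; rewrite ltr_pM2l //; lra.
  have := hr _ tD_lt; rewrite nrmZ (gtr0_norm t_gt0) ipZr -/D ler_norml => /andP[hr_t _].
  have := hsc u v t; rewrite t_le1 ltW //= => /(_ isT).
  have -> : t *: u + (1 - t) *: v = v + t *: (u - v).
    by rewrite scalerBl scale1r scalerBr addrCA.
  rewrite -/D => hsc_t.
  have : t * (X - eps * D) <= t * (mu / 2 * D ^+ 2 * t) by rewrite /X; lra.
  by rewrite ler_pM2l.
apply: (@le0_of_le_linear _ _ D 1 ltr01) => eps eps_gt0 _.
by have := X_le_eps eps eps_gt0; lra.
Qed.

Lemma convex_grad_le mu : 0 <= mu -> strongly_convex ip mu f -> is_gradient ip f gf ->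
  forall u v, f v + ip (gf v) (u - v) <= f u.
Proof.
move=> mu_ge0 hsc hgrad u v; apply: le_trans (strongly_convex_grad_le mu_ge0 hsc hgrad u v).
by rewrite lerDl mulr_ge0 ?divr_ge0 ?sqr_ge0.
Qed.

Section Descent.
Variable L : R.
Hypothesis L_ge0 : 0 <= L.
Hypothesis grad_le : forall u v, f v + ip (gf v) (u - v) <= f u.
Hypothesis gf_lip : forall u v, nrm (gf u - gf v) <= L * nrm (u - v).

Lemma grad_increment_le u d s t : s <= t -> 0 <= t ->
  f (u + t *: d) - f (u + s *: d) <= (t - s) * (ip (gf u) d + L * t * nrm d ^+ 2).
Proof.
move=> s_le_t t_ge0; set p := u + s *: d; set p' := u + t *: d.
have lip : ip (gf p' - gf u) d <= L * t * nrm d ^+ 2.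
  apply: le_trans (cauchy_schwarz _ _) _; rewrite expr2 mulrA ler_wpM2r ?nrm_ge0 //.
  apply: le_trans (gf_lip _ _) _.
  by rewrite /p' addrAC subrr add0r nrmZ ger0_norm // mulrA.
have := grad_le p p'.
have -> : p - p' = (s - t) *: d by rewrite /p /p' opprD addrACA subrr add0r -scalerBl.
have -> : ip (gf p') ((s - t) *: d) = (s - t) * (ip (gf u) d + ip (gf p' - gf u) d).
  by rewrite ipZr ipDl ipNl addrCA subrr addr0.
have : (t - s) * ip (gf p' - gf u) d <= (t - s) * (L * t * nrm d ^+ 2).
  by rewrite ler_wpM2l // subr_ge0.
lra.
Qed.

Lemma descent_grid u d c m : 0 <= c ->
  f (u + (m%:R * c) *: d) - f u <=
    m%:R * c * ip (gf u) d + L * nrm d ^+ 2 * c ^+ 2 * (m%:R * (m%:R + 1)) / 2.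
Proof.
move=> c_ge0; elim: m => [|m IH].
  by rewrite mulr0n !(mul0r, mulr0, scale0r, addr0, subrr).
have mc_le : m%:R * c <= (m%:R + 1) * c by rewrite ler_wpM2r // lerDl.
have m1c_ge0 : 0 <= (m%:R + 1) * c by rewrite mulr_ge0 // addr_ge0.
have := grad_increment_le u d mc_le m1c_ge0.
rewrite -natr1; lra.
Qed.

Lemma descent_lemma u v : f v <= f u + ip (gf u) (v - u) + L / 2 * nrm (v - u) ^+ 2.
Proof.
set d := v - u; have ud_eq : u + d = v by rewrite addrC subrK.
suff : f v - (f u + ip (gf u) d + L / 2 * nrm d ^+ 2) <= 0 by rewrite subr_le0.
apply: (@le0_of_le_div_nat _ _ (L / 2 * nrm d ^+ 2)).
  by rewrite mulr_ge0 ?divr_ge0 ?sqr_ge0.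
move=> n n_gt0; have n_neq0 : n%:R != 0 :> R by rewrite pnatr_eq0 -lt0n.
have := descent_grid u d (c := n%:R^-1) n.
rewrite invr_ge0 ler0n divff // scale1r ud_eq mul1r => /(_ isT).
have -> : L * nrm d ^+ 2 * n%:R^-1 ^+ 2 * (n%:R * (n%:R + 1)) / 2
        = L / 2 * nrm d ^+ 2 + L / 2 * nrm d ^+ 2 / n%:R by field.
lra.
Qed.

End Descent.

Lemma If_ge0 L mu : 0 < mu -> mu < L -> strongly_convex ip mu f -> L_smooth ip L f gf ->
  forall u v, 0 <= If ip L mu gf f u v.
Proof.
move=> mu_gt0 mu_lt_L hsc [hgrad gf_lip] u v.
have grad_le := convex_grad_le (ltW mu_gt0) hsc hgrad.
have descent := descent_lemma (ltW (lt_trans mu_gt0 mu_lt_L)) grad_le gf_lip.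
(* At this w the descent bound at u and the strong convexity bound at v sum to If u v. *)
pose w := u - (L - mu)^-1 *: (gf u - gf v - mu *: (u - v)).
have := strongly_convex_grad_le (ltW mu_gt0) hsc hgrad w v.
have := descent u w.
suff -> : If ip L mu gf f u v =
    (f u + ip (gf u) (w - u) + L / 2 * nrm (w - u) ^+ 2 - f w)
  + (f w - (f v + ip (gf v) (w - v) + mu / 2 * nrm (w - v) ^+ 2)) by lra.
rewrite /If !nrm_sqrE /w !ipE; ip_sym; field.
by rewrite subr_eq0 gt_eqF.
Qed.

End Smooth.

Section ConvexEfun.
Variable g : H -> \bar R.
Hypotheses (g_ninf : no_minus_infty g) (g_proper : proper_fun g).

Lemma minimizer_fin (a : H -> R) p :
  is_minimizer (fun u => ((a u)%:E + g u)%E) p -> g p = (fine (g p))%:E.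
Proof.
move=> p_min; have [u0 gu0_lt] := g_proper; have := p_min u0.
have := g_ninf p; case: (g p) => [r| |] //= _.
by case: (g u0) gu0_lt => [r0| |] //; rewrite ?ltxx // addey // leye_eq.
Qed.

Lemma prox_fin gam v p : is_prox ip g gam v p -> g p = (fine (g p))%:E.
Proof.
move=> p_prox; apply: (@minimizer_fin (fun u => (2 * gam)^-1 * nrm (v - u) ^+ 2)) => u.
by rewrite /= addeC [X in (_ <= X)%E]addeC.
Qed.

Hypothesis g_convex : convex_efun g.

Lemma convex_ge_of_segment_ge p u (gp l C : R) : g p = gp%:E ->
  (forall t gw, 0 < t -> t <= 1 -> g (t *: u + (1 - t) *: p) = gw%:E ->
     gp <= gw + t * l + t ^+ 2 * C) ->
  ((gp - l)%:E <= g u)%E.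
Proof.
move=> gpE hloc; have := g_ninf u.
case gu: (g u) => [gu'| |] //= _; last by rewrite leey.
rewrite lee_fin -subr_le0; apply: (@le0_of_le_linear _ _ C 1 ltr01) => t t_gt0 t_le1.
have := @g_convex u p t; rewrite ltW //= t_le1 gu gpE -!EFinM -EFinD => /(_ isT).
have := g_ninf (t *: u + (1 - t) *: p).
case gw: (g _) => [gw'| |] //= _; rewrite lee_fin => g_conv.
have := hloc t gw' t_gt0 t_le1 gw; rewrite -[_ <= C * t](ler_pM2l t_gt0); lra.
Qed.

Lemma prox_subgradient gam v p : 0 < gam -> is_prox ip g gam v p ->
  forall u, ((fine (g p) + ip (gam^-1 *: (v - p)) (u - p))%:E <= g u)%E.
Proof.
move=> gam_gt0 p_prox u; rewrite -[ip _ _]opprK.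
apply: (convex_ge_of_segment_ge (C := (2 * gam)^-1 * nrm (u - p) ^+ 2) (prox_fin p_prox))
  => t gw t_gt0 t_le1 gwE.
have := p_prox (t *: u + (1 - t) *: p); rewrite (prox_fin p_prox) gwE -!EFinD lee_fin.
have -> : v - (t *: u + (1 - t) *: p) = (v - p) - t *: (u - p).
  by rewrite scalerBl scale1r scalerBr addrCA opprD addrA.
rewrite !nrm_sqrE !ipE; ip_sym; rewrite invfM.
lra.
Qed.

Lemma minimizer_subgradient (f : H -> R) (gf : H -> H) L xs :
  (forall u v, f v <= f u + ip (gf u) (v - u) + L / 2 * nrm (v - u) ^+ 2) ->
  is_minimizer (fun u => ((f u)%:E + g u)%E) xs ->
  forall u, ((fine (g xs) - ip (gf xs) (u - xs))%:E <= g u)%E.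
Proof.
move=> descent xs_min u.
apply: (convex_ge_of_segment_ge (C := L / 2 * nrm (u - xs) ^+ 2) (minimizer_fin xs_min))
  => t gw t_gt0 t_le1 gwE.
have := xs_min (t *: u + (1 - t) *: xs); rewrite /= (minimizer_fin xs_min) gwE.
rewrite -!EFinD lee_fin.
have := descent xs (t *: u + (1 - t) *: xs).
have -> : t *: u + (1 - t) *: xs - xs = t *: (u - xs).
  by rewrite scalerBl scale1r scalerBr addrCA addrAC subrr add0r.
rewrite nrmZ (gtr0_norm t_gt0) ipZr exprMn.
lra.
Qed.

End ConvexEfun.

Section LyapunovStep.
Variables (L mu : R) (f : H -> R) (gf : H -> H).
Local Notation q := (mu / L).
Local Notation IfL := (If ip L mu gf f).
Hypotheses (mu_gt0 : 0 < mu) (mu_lt_L : mu < L).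
Variables (A P d sig b : R).
Hypotheses (A_rec : (1 - q) ^+ 2 * P = (1 + q) * A + 2 * (1 + sig))
  (P_d : P = d ^+ 2 / (1 - q * d ^+ 2)) (sig_d : sig = 1 + A / d)
  (b_def : b = A / ((1 - q) * P)) (d_gt0 : 0 < d) (qd_lt1 : 0 < 1 - q * d ^+ 2).

Lemma lyapunov_identity xs zk yp s sp y zk1 (gx gz gz1 : R) :
  y = (1 - b) *: zk + b *: (yp - L^-1 *: gf yp - L^-1 *: s) ->
  zk1 = (1 - q * d) *: zk + (q * d) *: y - (d / L) *: gf y - (d / L) *: sp ->
  (1 - q) * A * IfL yp xs + q * A * (gx - gz - ip s (xs - zk))
  + (q * A + 1 - sig) * (gz - gx - ip (- gf xs) (zk - xs))
  + A / (2 * L) * nrm (s - - gf xs) ^+ 2 + (L + mu * A) * nrm (zk - xs) ^+ 2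
  - (L + mu * P) * nrm (zk1 - xs) ^+ 2
  = (1 - q) * A * IfL yp y + (1 - q) * P * IfL y xs + (1 - q) * (P - A) * IfL xs y
    + (sig - 1) * (gz1 - gz - ip s (zk1 - zk))
    + (2 * P - A) / d * (gz1 - gx + ip (gf xs) (zk1 - xs))
    + 2 * d * (1 + q * P) * (gx - gz1 - ip sp (xs - zk1))
    + A / (2 * L) * nrm (s - sp) ^+ 2 + (P - A / 2) / L * nrm (sp + gf xs) ^+ 2.
Proof.
move=> y_eq zk1_eq.
have L_gt0 : 0 < L := lt_trans mu_gt0 mu_lt_L.
have Lmu_gt0 : 0 < L - mu by rewrite subr_gt0.
have Lmud_gt0 : 0 < L - mu * d ^+ 2.
  by rewrite (_ : L - _ = L * (1 - q * d ^+ 2)) ?mulr_gt0 //; field; rewrite gt_eqF.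
have dLmu_gt0 : 0 < d * (L + mu) + 2 * L by rewrite addr_gt0 ?mulr_gt0 ?addr_gt0.
have A_d : A = d * ((1 - q) ^+ 2 * P - 4) / (d * (1 + q) + 2).
  by rewrite A_rec sig_d; field; rewrite !gt_eqF.
rewrite /If !nrm_sqrE zk1_eq; set gy := gf y; set fy := f y; rewrite y_eq.
rewrite !ipE; ip_sym; rewrite sig_d b_def A_d P_d.
by field; rewrite !gt_eqF.
Qed.

Lemma lyapunov_decrease xs zk yp s sp y zk1 (gx gz gz1 : R) :
  y = (1 - b) *: zk + b *: (yp - L^-1 *: gf yp - L^-1 *: s) ->
  zk1 = (1 - q * d) *: zk + (q * d) *: y - (d / L) *: gf y - (d / L) *: sp ->
  0 <= A -> A <= P -> (forall u v, 0 <= IfL u v) ->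
  0 <= (sig - 1) * (gz1 - gz - ip s (zk1 - zk)) ->
  gx - ip (gf xs) (zk1 - xs) <= gz1 ->
  gz1 + ip sp (xs - zk1) <= gx ->
  (L + mu * P) * nrm (zk1 - xs) ^+ 2 <=
  (1 - q) * A * IfL yp xs + q * A * (gx - gz - ip s (xs - zk))
  + (q * A + 1 - sig) * (gz - gx - ip (- gf xs) (zk - xs))
  + A / (2 * L) * nrm (s - - gf xs) ^+ 2 + (L + mu * A) * nrm (zk - xs) ^+ 2.
Proof.
move=> y_eq zk1_eq A_ge0 A_le_P If_ge0 s_sub xs_sub sp_sub.
rewrite -subr_ge0 (@lyapunov_identity xs zk yp s sp y zk1 gx gz gz1 y_eq zk1_eq).
have L_gt0 : 0 < L := lt_trans mu_gt0 mu_lt_L.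
have q1_ge0 : 0 <= 1 - q by rewrite subr_ge0 ler_pdivrMr // mul1r ltW.
have P_ge0 : 0 <= P := le_trans A_ge0 A_le_P.
have qP_ge0 : 0 <= q * P := mulr_ge0 (divr_ge0 (ltW mu_gt0) (ltW L_gt0)) P_ge0.
have dqP_ge0 : 0 <= 2 * d * (1 + q * P) by have := ltW d_gt0; nra.
repeat apply: addr_ge0.
- exact: mulr_ge0 (mulr_ge0 q1_ge0 A_ge0) (If_ge0 _ _).
- exact: mulr_ge0 (mulr_ge0 q1_ge0 P_ge0) (If_ge0 _ _).
- by apply: mulr_ge0 (If_ge0 _ _); rewrite mulr_ge0 // subr_ge0.
- exact: s_sub.
- by apply: mulr_ge0; [rewrite divr_ge0 ?(ltW d_gt0) // | ]; lra.
- by apply: mulr_ge0 => //; lra.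
- by rewrite mulr_ge0 ?sqr_ge0 // divr_ge0 // mulr_ge0 // ltW.
- by rewrite mulr_ge0 ?sqr_ge0 // divr_ge0 ?(ltW L_gt0) //; lra.
Qed.

End LyapunovStep.

Section ProxItem.
Variables (mu L : R) (f : H -> R) (gf : H -> H) (g : H -> \bar R) (xs : H).
Variables (x z : nat -> H).
Hypotheses (mu_gt0 : 0 < mu) (mu_lt_L : mu < L).
Hypotheses (f_sconv : strongly_convex ip mu f) (f_smooth : L_smooth ip L f gf).
Hypotheses (g_ninf : no_minus_infty g) (g_proper : proper_fun g) (g_convex : convex_efun g).
Hypothesis xs_min : is_minimizer (fun u => ((f u)%:E + g u)%E) xs.
Hypothesis iter : prox_item ip L mu gf x z g.

Local Notation q := (mu / L).
Local Notation s := (sg L mu gf x z).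
Local Notation y := (yit L mu x z).

Let L_gt0 : 0 < L := lt_trans mu_gt0 mu_lt_L.
Let q_gt0 : 0 < q := divr_gt0 mu_gt0 L_gt0.
Let q_lt1 : q < 1. Proof. by rewrite ltr_pdivrMr // mul1r. Qed.
Let d_gt0 k : 0 < delta q k. Proof. by apply: delta_gt0. Qed.
Let xs_fin : g xs = (fine (g xs))%:E := minimizer_fin g_ninf g_proper xs_min.

Lemma z_succ_fin k : g (z k.+1) = (fine (g (z k.+1)))%:E.
Proof. by case: iter => _ z_prox _; apply: (prox_fin g_ninf g_proper (z_prox k)). Qed.

Lemma s_succ_subgradient k u :
  ((fine (g (z k.+1)) + ip (s k.+1) (u - z k.+1))%:E <= g u)%E.
Proof.
case: iter => _ z_prox _.
have := prox_subgradient g_ninf g_proper g_convex (divr_gt0 (d_gt0 k) L_gt0) (z_prox k) u.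
by rewrite invf_div.
Qed.

Lemma z_succE k : z k.+1 = (1 - q * delta q k) *: z k + (q * delta q k) *: y k
  - (delta q k / L) *: gf (y k) - (delta q k / L) *: s k.+1.
Proof.
rewrite /sg /= scalerA.
have -> : delta q k / L * (L * (delta q k)^-1) = 1 by field; rewrite !gt_eqF.
by rewrite scale1r /zbar_next opprB addrCA subrr addr0.
Qed.

(* beta_0 = 0, so x^0 and the conventions y^{-1} = y^0, s_g^0 = s_g^1 play no role. *)
Lemma yitE k : y k = (1 - beta q k) *: z k
  + beta q k *: (yprev L mu x z k - L^-1 *: gf (yprev L mu x z k) - L^-1 *: s k).
Proof.
case: k => [|k]; first by rewrite /yit /beta /= !mul0r !scale0r.
case: iter => _ _ x_succ; rewrite {1}/yit x_succ /sg /= scalerA mulKf //.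
by rewrite gt_eqF.
Qed.

Definition Vk_real k : R :=
  (1 - q) * Aseq q k * If ip L mu gf f (yprev L mu x z k) xs
  + q * Aseq q k * (fine (g xs) - fine (g (z k)) - ip (s k) (xs - z k))
  + (q * Aseq q k + 1 - sigma q k)
    * (fine (g (z k)) - fine (g xs) - ip (- gf xs) (z k - xs))
  + Aseq q k / (2 * L) * nrm (s k - - gf xs) ^+ 2
  + (L + mu * Aseq q k) * nrm (z k - xs) ^+ 2.

(* For k = 0 both I_g terms have weight 0 (A_0 = 0, sigma_0 = 1): g (z 0) may be +oo. *)
Lemma VkE k : Vk ip L mu gf x z f g xs k = (Vk_real k)%:E.
Proof.
have Ig_fine c u v w : c = 0 \/ g u = (fine (g u))%:E /\ g v = (fine (g v))%:E ->
    (c%:E * Ig ip g u v w = (c * (fine (g u) - fine (g v) - ip w (u - v)))%:E)%E.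
  case=> [->|[gu gv]]; first by rewrite mul0r mul0e.
  by rewrite /Ig gu gv -!EFinB -EFinM.
rewrite /Vk /Vk_real !Ig_fine -?EFinD //; case: k => [|k].
- by left; rewrite /= mulr0 add0r sigma0 subrr.
- by right; split; [exact: z_succ_fin | exact: xs_fin].
- by left; rewrite /= mulr0.
- by right; split; [exact: xs_fin | exact: z_succ_fin].
Qed.

Lemma sigma_sub1_subgradient k :
  0 <= (sigma q k - 1) * (fine (g (z k.+1)) - fine (g (z k)) - ip (s k) (z k.+1 - z k)).
Proof.
case: k => [|k]; first by rewrite sigma0 subrr mul0r.
apply: mulr_ge0; first by rewrite subr_ge0; apply: sigma_ge1.
by have := s_succ_subgradient k (z k.+2); rewrite (z_succ_fin k.+1) lee_fin; lra.
Qed.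

Lemma prox_item_lyapunov k :
  (((L + mu * Aseq q k.+1) * nrm (z k.+1 - xs) ^+ 2)%:E <= Vk ip L mu gf x z f g xs k)%E.
Proof.
have [f_grad f_lip] := f_smooth.
have f_descent := descent_lemma (ltW L_gt0) (convex_grad_le (ltW mu_gt0) f_sconv f_grad) f_lip.
rewrite VkE lee_fin.
apply: (lyapunov_decrease mu_gt0 mu_lt_L _ _ _ erefl _ _ (yitE k) (z_succE k)).
- by apply: Aseq_succE.
- by apply: Aseq_succ_delta.
- by apply: sigma_delta.
- exact: d_gt0.
- by apply: q_delta_lt1.
- by apply: Aseq_ge0.
- by apply: Aseq_le_succ.
- exact: If_ge0 mu_gt0 mu_lt_L f_sconv f_smooth.
- exact: sigma_sub1_subgradient.
- have := minimizer_subgradient g_ninf g_proper g_convex f_descent xs_min (z k.+1).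
  by rewrite z_succ_fin lee_fin.
- by have := s_succ_subgradient k xs; rewrite xs_fin lee_fin.
Qed.

End ProxItem.

End Hilbert.

Theorem lemma3 (R : realType) (H : lmodType R) (ip : H -> H -> R)
  (hH : is_hilbert ip)
  (mu L : R) (hmu : 0 < mu) (hmuL : mu < L)
  (f : H -> R) (gf : H -> H)
  (hfconv : strongly_convex ip mu f) (hfsmooth : L_smooth ip L f gf)
  (g : H -> \bar R) (hgninf : no_minus_infty g) (hgproper : proper_fun g)
  (hgconv : convex_efun g) (hglsc : lsc_efun ip g)
  (xs : H) (hxs : is_minimizer (fun u => ((f u)%:E + g u)%E) xs)
  (hxsuniq : forall y, is_minimizer (fun u => ((f u)%:E + g u)%E) y -> y = xs)
  (x z : nat -> H) (hit : prox_item ip L mu gf x z g) :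
  forall k : nat,
    (((L + mu * Aseq (mu / L) k.+1) * nrm ip (z k.+1 - xs) ^+ 2)%:E
       <= Vk ip L mu gf x z f g xs k)%E.
Proof.
have [[ipC ipL ip_ge0 ip_eq0] _] := hH.
exact: (@prox_item_lyapunov R H ip ipC ipL ip_ge0 ip_eq0 mu L f gf g xs x z
  hmu hmuL hfconv hfsmooth hgninf hgproper hgconv hxs hit).
Qed.
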